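(* Let $H$ be a subgroup of Thompson's group $F$ such that: (1) for every $r\in\mathbb{N}$, $1^r0\sim_H 10$; (2) for every $s\in\mathbb{N}$, $0^s1\sim_H 01$; (3) $01\sim_H 10\sim_H 010\sim_H 011$. Then $\mathrm{Cl}(H)$ contains the derived subgroup $[F,F]$.
   Context: Thompson's group $F$ is the group of all piecewise linear homeomorphisms of $[0,1]$ with finitely many breakpoints, all breakpoints dyadic fractions and all slopes integer powers of $2$. For a finite binary word $u$, let $[u]$ denote the dyadic interval of numbers whose binary expansion begins with $u$. An element $h\in F$ has the pair of branches $u\rightarrow v$ if $h(.u\alpha)=.v\alpha$ for every infinite binary word $\alpha$ (i.e. $h$ maps $[u]$ linearly onto $[v]$). For $H\le F$ and finite binary words $u,v$, write $u\sim_H v$ if some $h\in H$ has the pair of branches $u\rightarrow v$ (an equivalence relation). The closure $\mathrm{Cl}(H)$ is the subgroup of all $f\in F$ for which there is a finite subdivision of $[0,1]$ into intervals such that on each interval $f$ coincides with some element of $H$. Words like $1^r0$ denote $r$ copies of $1$ followed by $0$. *)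

From Stdlib Require Import Reals List ZArith.
Import ListNotations.
Open Scope R_scope.

Definition dyadic (x : R) : Prop :=
  exists (m : Z) (n : nat), x = IZR m / 2 ^ n.

(* Elements of Thompson's group F, viewed as maps R -> R that are the
   identity outside [0,1] (convention; only the restriction to [0,1] matters).
   On [0,1]: a subdivision 0 = p 0 < ... < p n = 1 by dyadic points, affine
   with slope a power of 2 on each closed piece (hence continuous and
   increasing), fixing 0 and 1 (hence a homeomorphism of [0,1]). *)
Definition inF (f : R -> R) : Prop :=
  (forall x, (x < 0 \/ 1 < x) -> f x = x) /\
  f 0 = 0 /\ f 1 = 1 /\
  exists (n : nat) (p : nat -> R),
    p 0%nat = 0 /\ p n = 1 /\
    (forall i, (i < n)%nat -> p i < p (S i)) /\
    (forall i, (i <= n)%nat -> dyadic (p i)) /\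
    (forall i, (i < n)%nat ->
       exists (k : Z) (b : R),
         forall x, p i <= x <= p (S i) -> f x = powerRZ 2 k * x + b).

Fixpoint wval (u : list bool) : R :=
  match u with
  | [] => 0
  | b :: u' => ((if b then 1 else 0) + wval u') / 2
  end.

(* h has the pair of branches u -> v: h maps [u] = [.u, .u + 2^-|u|]
   linearly (increasingly) onto [v], i.e. h(.u alpha) = .v alpha. *)
Definition branch (h : R -> R) (u v : list bool) : Prop :=
  forall x, wval u <= x <= wval u + / 2 ^ length u ->
    h x = wval v + (x - wval u) * 2 ^ length u / 2 ^ length v.

Definition subgroupF (H : (R -> R) -> Prop) : Prop :=
  (forall h, H h -> inF h) /\
  H (fun x => x) /\
  (forall g h, H g -> H h -> H (fun x => g (h x))) /\
  (forall h, H h -> exists g, H g /\ forall x, g (h x) = x /\ h (g x) = x).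

Definition simH (H : (R -> R) -> Prop) (u v : list bool) : Prop :=
  exists h, H h /\ branch h u v.

Definition inCl (H : (R -> R) -> Prop) (f : R -> R) : Prop :=
  inF f /\
  exists (n : nat) (p : nat -> R),
    p 0%nat = 0 /\ p n = 1 /\
    (forall i, (i < n)%nat -> p i < p (S i)) /\
    (forall i, (i < n)%nat ->
       exists h, H h /\ forall x, p i <= x <= p (S i) -> f x = h x).

Definition inverse_of (g f : R -> R) : Prop :=
  forall x, g (f x) = x /\ f (g x) = x.

Definition commF (c : R -> R) : Prop :=
  exists f g fi gi, inF f /\ inF g /\ inverse_of fi f /\ inverse_of gi g /\
    forall x, c x = f (g (fi (gi x))).

Inductive derivedF : (R -> R) -> Prop :=
  | dF_id : derivedF (fun x => x)
  | dF_comm : forall c, commF c -> derivedF c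
  | dF_mul : forall f g, derivedF f -> derivedF g -> derivedF (fun x => f (g x))
  | dF_inv : forall f g, derivedF f -> inverse_of g f -> derivedF g.

From Stdlib Require Import Reals List Lra Lia ZArith FunctionalExtensionality.
Import ListNotations.
Open Scope R_scope.

(* The hypotheses make every word containing both letters H-equivalent to 01:
   010 ~ 01 and 011 ~ 01 give 01w ~ 01 by induction on w, while
   1^r0w ~ 10w ~ 01w and 0^s1w ~ 01w.
   An element f of [F,F] is the identity near 0 and near 1, and for N large it maps every
   interval [u] with |u| = N by a branch u -> v.  When u contains both letters, so does v
   (f is injective and fixes 0 and 1), hence u ~ v and some h in H agrees with f on [u];
   the two extreme intervals [0^N] and [1^N] lie where f is the identity.  So f is
   locally in H.  Both properties of f hold for commutators of elements of F and are
   preserved by products and inverses. *)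

Lemma pow2_pos n : 0 < 2 ^ n.
Proof. apply pow_lt; lra. Qed.

Lemma pow2_neq0 n : 2 ^ n <> 0.
Proof. generalize (pow2_pos n); lra. Qed.

Lemma pow2_inv_pos n : 0 < / 2 ^ n.
Proof. apply Rinv_0_lt_compat, pow2_pos. Qed.

Lemma pow2_IZR n : 2 ^ n = IZR (2 ^ Z.of_nat n).
Proof. rewrite <- pow_IZR. reflexivity. Qed.

Lemma powerRZ2_sub m n : powerRZ 2 (Z.of_nat m - Z.of_nat n) = 2 ^ m / 2 ^ n.
Proof.
  unfold Z.sub. rewrite powerRZ_add, powerRZ_neg', <- !pow_powerRZ by lra.
  reflexivity.
Qed.

Lemma pow2_inv_le e N0 : 0 < e -> exists N, (N0 <= N)%nat /\ / 2 ^ N <= e.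
Proof.
  intros He. destruct (archimed (/ e)) as [Hup _].
  assert (Z0 : (0 <= up (/ e))%Z).
  { apply le_IZR. pose proof (Rinv_0_lt_compat e He). lra. }
  exists (N0 + Z.to_nat (up (/ e)))%nat. split; [lia|].
  assert (Hle : / e <= 2 ^ (N0 + Z.to_nat (up (/ e)))).
  { assert (Hn : forall n, INR n <= 2 ^ n).
    { induction n as [|n IH]; [simpl; lra|].
      rewrite S_INR. simpl. pose proof (pow_R1_Rle 2 n ltac:(lra)). lra. }
    eapply Rle_trans; [|apply Hn].
    rewrite plus_INR, (INR_IZR_INZ (Z.to_nat _)), Z2Nat.id by exact Z0.
    pose proof (pos_INR N0). lra. }
  apply Rinv_le_contravar in Hle; [|apply Rinv_0_lt_compat; exact He].
  rewrite Rinv_inv in Hle. exact Hle.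
Qed.

(** * Words and dyadic intervals *)

(* [cylinder u] is the interval [u]; [rescale u v] is the affine map of [u] onto [v],
   so that [branch h u v] says that [h] agrees with [rescale u v] on [cylinder u]. *)
Definition cylinder (u : list bool) (x : R) : Prop :=
  wval u <= x <= wval u + / 2 ^ length u.

Definition rescale (u v : list bool) (x : R) : R :=
  wval v + (x - wval u) * 2 ^ length u / 2 ^ length v.

Lemma wval_bounds u : 0 <= wval u /\ wval u + / 2 ^ length u <= 1.
Proof.
  induction u as [|b u IH]; simpl.
  - rewrite Rinv_1; lra.
  - rewrite Rinv_mult. destruct b; lra.
Qed.

Lemma wval_app u w : wval (u ++ w) = wval u + wval w / 2 ^ length u.
Proof.
  induction u as [|b u IH]; simpl.
  - field.
  - rewrite IH. field. apply pow2_neq0.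
Qed.

Lemma wval_no_true u : ~ In true u -> wval u = 0.
Proof.
  induction u as [|[|] u IH]; simpl; intros Hn; [reflexivity | tauto |].
  rewrite IH by tauto. field.
Qed.

Lemma wval_pos u : In true u -> 0 < wval u.
Proof.
  induction u as [|[|] u IH]; simpl; intros Hin; [destruct Hin| |];
    destruct (wval_bounds u); [lra|].
  destruct Hin as [E|Hin]; [discriminate|]. specialize (IH Hin). lra.
Qed.

Lemma wval_end_no_false u : ~ In false u -> wval u + / 2 ^ length u = 1.
Proof.
  induction u as [|[|] u IH]; simpl; intros Hn; [field | | tauto].
  rewrite Rinv_mult. assert (E : wval u + / 2 ^ length u = 1) by tauto. lra.
Qed.

Lemma wval_end_lt1 u : In false u -> wval u + / 2 ^ length u < 1.
Proof.
  induction u as [|[|] u IH]; simpl; intros Hin; [destruct Hin| |];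
    destruct (wval_bounds u); rewrite Rinv_mult; pose proof (pow2_inv_pos (length u));
    [|lra].
  destruct Hin as [E|Hin]; [discriminate|]. specialize (IH Hin). lra.
Qed.

Lemma cylinder_app u w x : cylinder (u ++ w) x -> cylinder u x.
Proof.
  unfold cylinder. rewrite wval_app, length_app, pow_add, Rinv_mult.
  destruct (wval_bounds w) as [W0 W1].
  pose proof (pow2_inv_pos (length u)). pose proof (pow2_inv_pos (length w)).
  unfold Rdiv. nra.
Qed.

Lemma rescale_app u v w x : rescale (u ++ w) (v ++ w) x = rescale u v x.
Proof.
  unfold rescale. rewrite !wval_app, !length_app, !pow_add.
  field. repeat split; apply pow2_neq0.
Qed.

Lemma rescale_cylinder u v x : cylinder u x -> cylinder v (rescale u v x).
Proof.
  unfold cylinder, rescale. intros [Hl Hr].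
  pose proof (pow2_pos (length u)) as Pu. pose proof (pow2_inv_pos (length v)).
  assert (T1 : (x - wval u) * 2 ^ length u <= 1).
  { rewrite <- (Rinv_l (2 ^ length u)) by lra. apply Rmult_le_compat_r; lra. }
  assert (T0 : 0 <= (x - wval u) * 2 ^ length u) by (apply Rmult_le_pos; lra).
  unfold Rdiv. nra.
Qed.

Lemma rescale_comp u v w x : rescale v w (rescale u v x) = rescale u w x.
Proof. unfold rescale. field. split; apply pow2_neq0. Qed.

Lemma rescale_id u x : rescale u u x = x.
Proof. unfold rescale. field. apply pow2_neq0. Qed.

Lemma branch_app h u v w : branch h u v -> branch h (u ++ w) (v ++ w).
Proof.
  intros Hb x Hx. change (h x = rescale (u ++ w) (v ++ w) x).
  rewrite rescale_app. exact (Hb x (cylinder_app u w x Hx)).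
Qed.

Lemma branch_comp g h u v w :
  branch h u v -> branch g v w -> branch (fun x => g (h x)) u w.
Proof.
  intros Hh Hg x Hx. change (g (h x) = rescale u w x).
  rewrite (Hh x Hx), <- (rescale_comp u v w).
  exact (Hg _ (rescale_cylinder u v x Hx)).
Qed.

Lemma branch_inverse f g u v : branch f u v -> inverse_of g f -> branch g v u.
Proof.
  intros Hf Hg y Hy. change (g y = rescale v u y).
  assert (E : f (rescale v u y) = rescale u v (rescale v u y))
    by exact (Hf _ (rescale_cylinder v u y Hy)).
  rewrite rescale_comp, rescale_id in E. rewrite <- E at 1. apply Hg.
Qed.

Lemma branch_id u : branch (fun x => x) u u.
Proof. intros x _. symmetry. apply rescale_id. Qed.

(** * The relation [simH H] *)

Definition mixed (u : list bool) : Prop := In true u /\ In false u.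

Lemma repeat_split b u : In (negb b) u -> exists r w, u = repeat b r ++ negb b :: w.
Proof.
  induction u as [|c u IH]; intros Hin; [destruct Hin|].
  destruct (Bool.bool_dec c (negb b)) as [->|Hc].
  - exists 0%nat, u. reflexivity.
  - destruct Hin as [E|Hin]; [congruence|].
    destruct (IH Hin) as [r [w ->]]. exists (S r), w.
    destruct b, c; simpl in *; congruence.
Qed.

Lemma mixed_cons_split c u :
  mixed (c :: u) -> exists r w, c :: u = (repeat c (S r) ++ [negb c]) ++ w.
Proof.
  intros [Ht Hf].
  assert (Hin : In (negb c) u).
  { destruct c; simpl in *; [destruct Hf as [E|Hf] | destruct Ht as [E|Ht]]; easy. }
  destruct (repeat_split c u Hin) as [r [w ->]].
  exists r, w. rewrite <- app_assoc. reflexivity.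
Qed.

Section Equivalence.

Variable H : (R -> R) -> Prop.
Hypothesis HF : subgroupF H.

Lemma simH_refl u : simH H u u.
Proof. exists (fun x => x). split; [apply HF | apply branch_id]. Qed.

Lemma simH_sym u v : simH H u v -> simH H v u.
Proof.
  intros [h [Hh Hb]]. destruct HF as [_ [_ [_ Hinv]]].
  destruct (Hinv h Hh) as [g [Hg Hgh]].
  exists g. split; [exact Hg|]. apply (branch_inverse h); [exact Hb|]. exact Hgh.
Qed.

Lemma simH_trans u v w : simH H u v -> simH H v w -> simH H u w.
Proof.
  intros [h [Hh Hhb]] [g [Hg Hgb]]. exists (fun x => g (h x)). split.
  - apply HF; assumption.
  - apply (branch_comp g h u v w); assumption.
Qed.

Lemma simH_app u v w : simH H u v -> simH H (u ++ w) (v ++ w).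
Proof. intros [h [Hh Hb]]. exists h. split; [exact Hh | apply branch_app, Hb]. Qed.

Hypothesis ones_zero :
  forall r, (1 <= r)%nat -> simH H (repeat true r ++ [false]) [true; false].
Hypothesis zeros_one :
  forall s, (1 <= s)%nat -> simH H (repeat false s ++ [true]) [false; true].
Hypothesis sim01_10 : simH H [false; true] [true; false].
Hypothesis sim10_010 : simH H [true; false] [false; true; false].
Hypothesis sim010_011 : simH H [false; true; false] [false; true; true].

Lemma simH_01_app w : simH H ([false; true] ++ w) [false; true].
Proof.
  induction w as [|b w IH]; [apply simH_refl|].
  apply (simH_trans _ ([false; true] ++ w)); [|exact IH].
  apply (simH_app [false; true; b] [false; true] w).
  assert (S010 : simH H [false; true] [false; true; false])
    by (apply (simH_trans _ [true; false]); assumption).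
  apply simH_sym. destruct b; [apply (simH_trans _ [false; true; false])|]; assumption.
Qed.

Lemma simH_mixed u : mixed u -> simH H u [false; true].
Proof.
  destruct u as [|c u]; [intros [[] _]|].
  intros Hm. destruct (mixed_cons_split c u Hm) as [r [w ->]].
  apply (simH_trans _ ([false; true] ++ w)); [|apply simH_01_app].
  destruct c; simpl negb.
  - apply (simH_trans _ ([true; false] ++ w)); apply simH_app.
    + apply ones_zero. lia.
    + apply simH_sym, sim01_10.
  - apply simH_app, zeros_one. lia.
Qed.

End Equivalence.

Definition dyadic_at (D : nat) (x : R) : Prop := exists m : Z, x = IZR m / 2 ^ D.

Lemma dyadicE x : dyadic x <-> exists D, dyadic_at D x.
Proof. split; intros [a [b E]]; exists b, a; exact E. Qed.

Lemma dyadic_at_mono D D' x : (D <= D')%nat -> dyadic_at D x -> dyadic_at D' x.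
Proof.
  intros HD [m ->]. exists (m * 2 ^ Z.of_nat (D' - D))%Z.
  replace D' with (D + (D' - D))%nat at 2 by lia.
  rewrite mult_IZR, <- pow2_IZR, pow_add. field. split; apply pow2_neq0.
Qed.

Lemma dyadic_add x y : dyadic x -> dyadic y -> dyadic (x + y).
Proof.
  rewrite !dyadicE. intros [D1 Hx] [D2 Hy].
  destruct (dyadic_at_mono D1 (D1 + D2) x ltac:(lia) Hx) as [a ->].
  destruct (dyadic_at_mono D2 (D1 + D2) y ltac:(lia) Hy) as [b ->].
  exists (D1 + D2)%nat, (a + b)%Z. rewrite plus_IZR. field. apply pow2_neq0.
Qed.

Lemma dyadic_opp x : dyadic x -> dyadic (- x).
Proof.
  intros [m [n ->]]. exists (- m)%Z, n. rewrite opp_IZR. field. apply pow2_neq0.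
Qed.

Lemma dyadic_pow2_mul k x : dyadic x -> dyadic (powerRZ 2 k * x).
Proof.
  intros [m [n ->]]. destruct k as [|q|q]; simpl.
  - exists m, n. ring.
  - exists (m * 2 ^ Z.of_nat (Pos.to_nat q))%Z, n.
    rewrite mult_IZR, <- pow2_IZR. field. apply pow2_neq0.
  - exists m, (n + Pos.to_nat q)%nat. rewrite pow_add. field. split; apply pow2_neq0.
Qed.

Lemma dyadic_at_gap N a y :
  dyadic_at N y -> IZR a / 2 ^ N < y -> IZR a / 2 ^ N + / 2 ^ N <= y.
Proof.
  intros [c ->] Hlt. pose proof (pow2_inv_pos N).
  assert (Hac : (a + 1 <= c)%Z).
  { apply Zlt_le_succ, lt_IZR. unfold Rdiv in Hlt. nra. }
  apply IZR_le in Hac. rewrite plus_IZR in Hac. unfold Rdiv. nra.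
Qed.

Lemma wval_num u :
  exists a, wval u = IZR a / 2 ^ length u /\ 0 <= IZR a /\ IZR a + 1 <= 2 ^ length u.
Proof.
  induction u as [|b u [a [E [A0 A1]]]]; simpl.
  - exists 0%Z. split; [field|lra].
  - exists ((if b then 2 ^ Z.of_nat (length u) else 0) + a)%Z.
    rewrite plus_IZR, E. destruct b; rewrite <- ?pow2_IZR;
      (split; [field; apply pow2_neq0|]); lra.
Qed.

Lemma word_of_num M a :
  0 <= IZR a -> IZR a + 1 <= 2 ^ M -> exists v, length v = M /\ wval v = IZR a / 2 ^ M.
Proof.
  revert a. induction M as [|M IH]; intros a A0 A1.
  - exists []. simpl in *. replace a with 0%Z; [split; [reflexivity|field]|].
    apply le_IZR in A0. assert (IZR a < 1) as A2 by lra. apply lt_IZR in A2. lia.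
  - simpl in A1. destruct (Rle_lt_dec (IZR a + 1) (2 ^ M)) as [Hlo|Hhi].
    + destruct (IH a A0 Hlo) as [v [Lv Ev]]. exists (false :: v). simpl.
      rewrite Lv, Ev. split; [reflexivity|]. field. apply pow2_neq0.
    + assert (Hge : (2 ^ Z.of_nat M <= a)%Z).
      { apply Zlt_succ_le, lt_IZR. rewrite <- Z.add_1_r, plus_IZR, <- pow2_IZR. lra. }
      apply IZR_le in Hge. rewrite <- pow2_IZR in Hge.
      destruct (IH (a - 2 ^ Z.of_nat M)%Z) as [v [Lv Ev]];
        rewrite ?minus_IZR, <- ?pow2_IZR; [lra|lra|].
      exists (true :: v). simpl. rewrite Lv, Ev, minus_IZR, <- pow2_IZR. split; [reflexivity|].
      field. apply pow2_neq0.
Qed.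

(** * Maps acting by branches *)

Lemma cylinder_cover N z : 0 <= z <= 1 -> exists u, length u = N /\ cylinder u z.
Proof.
  revert z. induction N as [|N IH]; intros z Hz.
  - exists []. unfold cylinder. simpl. rewrite Rinv_1. split; [reflexivity|lra].
  - destruct (Rle_lt_dec z (/ 2)) as [Hlo|Hhi].
    + destruct (IH (2 * z)) as [u [Lu Hu]]; [lra|].
      exists (false :: u). unfold cylinder in *. simpl. rewrite Lu, Rinv_mult in *.
      split; [reflexivity|lra].
    + destruct (IH (2 * z - 1)) as [u [Lu Hu]]; [lra|].
      exists (true :: u). unfold cylinder in *. simpl. rewrite Lu, Rinv_mult in *.
      split; [reflexivity|lra].
Qed.

Definition midpoint (y : list bool) : R := wval y + / 2 ^ S (length y).

Lemma cylinder_midpoint_prefix v y :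
  (length v <= length y)%nat -> cylinder v (midpoint y) -> exists w, y = v ++ w.
Proof.
  revert y. unfold cylinder, midpoint.
  induction v as [|b v IH]; intros y Hl Hy; [exists y; reflexivity|].
  destruct y as [|c y]; simpl in Hl; [lia|].
  simpl in Hy. rewrite !Rinv_mult in Hy.
  destruct (wval_bounds v). destruct (wval_bounds y).
  pose proof (pow2_inv_pos (length y)).
  assert (b = c) as <- by (destruct b, c; auto; exfalso; lra).
  destruct (IH y) as [w ->]; [lia| simpl; rewrite Rinv_mult; destruct b; lra|].
  exists w. reflexivity.
Qed.

Lemma inverse_of_sym f g : inverse_of g f -> inverse_of f g.
Proof. intros Hg x. split; apply Hg. Qed.

Lemma maps_unit_interval f g :
  (forall x, (x < 0 \/ 1 < x) -> f x = x) -> inverse_of g f ->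
  forall x, 0 <= x <= 1 -> 0 <= f x <= 1.
Proof.
  intros Hout Hg x Hx.
  assert (Hfix : ~ (f x < 0 \/ 1 < f x) ).
  { intros Hfx. pose proof (Hout (f x) Hfx) as E.
    destruct (Hg (f x)) as [E1 _]. destruct (Hg x) as [E2 _].
    rewrite E, E2 in E1. rewrite E1 in Hfx. lra. }
  lra.
Qed.

Definition branch_bounded (f : R -> R) (N K : nat) : Prop :=
  forall u, length u = N -> exists v, (length v <= K)%nat /\ branch f u v.

(* Unlike [inF], this notion is visibly closed under composition and inversion. *)
Record branched (f : R -> R) : Prop := {
  branched_out : forall x, (x < 0 \/ 1 < x) -> f x = x;
  branched_0 : f 0 = 0;
  branched_1 : f 1 = 1;
  branched_inverse : exists g, inverse_of g f;
  branched_bounded : exists N K, branch_bounded f N K }.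

Lemma branch_bounded_app f N K u w :
  branch_bounded f N K -> length u = N ->
  exists v, (length v <= K)%nat /\ branch f (u ++ w) (v ++ w).
Proof.
  intros Hf Lu. destruct (Hf u Lu) as [v [Lv Hv]].
  exists v. split; [exact Lv | apply branch_app, Hv].
Qed.

Lemma split_at_length (u : list bool) N :
  (N <= length u)%nat -> exists u1 w, u = u1 ++ w /\ length u1 = N.
Proof.
  intros HN. exists (firstn N u), (skipn N u).
  split; [symmetry; apply firstn_skipn | rewrite length_firstn; lia].
Qed.

Lemma branched_id : branched (fun x => x).
Proof.
  split; auto.
  - exists (fun x => x). intro x. split; reflexivity.
  - exists 0%nat, 0%nat. intros u Lu. exists u. split; [lia | apply branch_id].
Qed.

Lemma branched_comp g h : branched g -> branched h -> branched (fun x => g (h x)).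
Proof.
  intros [Og g0 g1 [gi Hgi] [Ng [Kg Bg]]] [Oh h0 h1 [hi Hhi] [Nh [Kh Bh]]].
  split.
  - intros x Hx. rewrite Oh, Og; auto.
  - rewrite h0, g0. reflexivity.
  - rewrite h1, g1. reflexivity.
  - exists (fun x => hi (gi x)). intro x. split.
    + destruct (Hgi (h x)) as [-> _]. apply Hhi.
    + destruct (Hhi (gi x)) as [_ ->]. apply Hgi.
  - exists (Nh + Ng)%nat, (Kg + Kh)%nat. intros u Lu.
    destruct (split_at_length u Nh) as [u1 [w [-> L1]]]; [lia|].
    rewrite length_app in Lu.
    destruct (branch_bounded_app h Nh Kh u1 w Bh L1) as [v1 [Lv1 B1]].
    destruct (split_at_length (v1 ++ w) Ng) as [v2 [w' [E L2]]];
      [rewrite length_app; lia|].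
    destruct (branch_bounded_app g Ng Kg v2 w' Bg L2) as [v3 [Lv3 B3]].
    exists (v3 ++ w'). split.
    + apply (f_equal (@length bool)) in E. rewrite !length_app in E. rewrite length_app. lia.
    + rewrite E in B1. exact (branch_comp g h _ _ _ B1 B3).
Qed.

Lemma branched_inv f g : branched f -> inverse_of g f -> branched g.
Proof.
  intros [Of f0 f1 _ [N [K Bf]]] Hg.
  assert (Og : forall x, (x < 0 \/ 1 < x) -> g x = x).
  { intros x Hx. rewrite <- (Of x Hx) at 1. apply Hg. }
  split; [exact Og | | | exists f; apply inverse_of_sym, Hg |].
  - rewrite <- f0 at 1. apply Hg.
  - rewrite <- f1 at 1. apply Hg.
  - exists K, (N + K)%nat. intros y Ly.
    assert (Hmid : 0 <= midpoint y <= 1).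
    { unfold midpoint. destruct (wval_bounds y). pose proof (pow2_inv_pos (length y)).
      simpl. rewrite Rinv_mult. lra. }
    pose proof (maps_unit_interval g f Og (inverse_of_sym f g Hg) _ Hmid) as Hgm.
    destruct (cylinder_cover N _ Hgm) as [u [Lu Hu]].
    destruct (Bf u Lu) as [v [Lv Bv]].
    assert (Hv : cylinder v (midpoint y)).
    { destruct (Hg (midpoint y)) as [_ <-].
      rewrite (Bv _ Hu). apply rescale_cylinder, Hu. }
    destruct (cylinder_midpoint_prefix v y ltac:(lia) Hv) as [w ->].
    exists (u ++ w). split; [rewrite !length_app in *; lia|].
    apply (branch_inverse f); [apply branch_app, Bv | exact Hg].
Qed.

(** * Elements of F act by branches *)

Lemma affine_branch f u k b D :
  (forall x, cylinder u x -> f x = powerRZ 2 k * x + b) ->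
  dyadic_at D b -> (Z.of_nat D + k <= Z.of_nat (length u))%Z ->
  0 <= f (wval u) -> f (wval u + / 2 ^ length u) <= 1 ->
  exists v, Z.of_nat (length v) = (Z.of_nat (length u) - k)%Z /\ branch f u v.
Proof.
  intros Hf [c Hc] HDk F0 F1.
  set (M := Z.to_nat (Z.of_nat (length u) - k)).
  assert (EM : Z.of_nat M = (Z.of_nat (length u) - k)%Z) by (apply Z2Nat.id; lia).
  assert (Hk : powerRZ 2 k = 2 ^ length u / 2 ^ M).
  { rewrite <- powerRZ2_sub. f_equal. lia. }
  assert (Hcyl0 : cylinder u (wval u)).
  { split; [lra|]. pose proof (pow2_inv_pos (length u)). lra. }
  assert (Hcyl1 : cylinder u (wval u + / 2 ^ length u)).
  { split; [pose proof (pow2_inv_pos (length u))|]; lra. }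
  destruct (wval_num u) as [a [Ea _]].
  set (a' := (a + c * 2 ^ Z.of_nat (M - D))%Z).
  assert (Efu : f (wval u) = IZR a' / 2 ^ M).
  { rewrite (Hf _ Hcyl0), Hk, Ea, Hc. unfold a'.
    rewrite plus_IZR, mult_IZR, <- pow2_IZR.
    assert (E2 : 2 ^ M = 2 ^ D * 2 ^ (M - D)) by (rewrite <- pow_add; f_equal; lia).
    rewrite E2.
    field. repeat split; apply pow2_neq0. }
  assert (Efu1 : f (wval u + / 2 ^ length u) = f (wval u) + / 2 ^ M).
  { rewrite !Hf by assumption. rewrite Hk. field. split; apply pow2_neq0. }
  destruct (word_of_num M a') as [v [Lv Ev]].
  - pose proof (pow2_pos M). rewrite Efu in F0.
    replace (IZR a') with (IZR a' / 2 ^ M * 2 ^ M) by (field; lra). nra.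
  - pose proof (pow2_pos M). rewrite Efu1, Efu in F1.
    replace (IZR a' + 1) with ((IZR a' / 2 ^ M + / 2 ^ M) * 2 ^ M) by (field; lra). nra.
  - exists v. split; [rewrite Lv; exact EM|].
    intros x Hx. change (f x = rescale u v x). unfold rescale.
    rewrite Hf, Lv, Ev, <- Efu, Hf, Hk by assumption.
    field. apply pow2_neq0.
Qed.

Lemma common_bound (P : nat -> nat -> Prop) n :
  (forall i D D', (D <= D')%nat -> P i D -> P i D') ->
  (forall i, (i < n)%nat -> exists D, P i D) ->
  exists D, forall i, (i < n)%nat -> P i D.
Proof.
  intros Hmono. induction n as [|n IH]; intros Hex; [exists 0%nat; lia|].
  destruct IH as [D1 H1]; [intros i Hi; apply Hex; lia|].
  destruct (Hex n ltac:(lia)) as [D2 H2].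
  exists (D1 + D2)%nat. intros i Hi.
  destruct (Nat.eq_dec i n) as [->|Hne].
  - apply (Hmono n D2); [lia | exact H2].
  - apply (Hmono i D1); [lia | apply H1; lia].
Qed.

Lemma find_piece (p : nat -> R) x n :
  p 0%nat <= x -> x < p n -> exists i, (i < n)%nat /\ p i <= x < p (S i).
Proof.
  induction n as [|n IH]; intros H0 Hn; [lra|].
  destruct (Rlt_le_dec x (p n)) as [Hlo|Hhi].
  - destruct (IH H0 Hlo) as [i [Hi Hp]]. exists i. split; [lia | exact Hp].
  - exists n. split; [lia | lra].
Qed.

Section PiecewiseAffine.

Variables (f : R -> R) (n : nat) (p : nat -> R).
Hypothesis p_incr : forall i, (i < n)%nat -> p i < p (S i).
Hypothesis p_dyadic : forall i, (i <= n)%nat -> dyadic (p i).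
Hypothesis f_affine : forall i, (i < n)%nat ->
  exists k b, forall x, p i <= x <= p (S i) -> f x = powerRZ 2 k * x + b.

Definition piece_at_level (i D : nat) : Prop :=
  exists k b, (forall x, p i <= x <= p (S i) -> f x = powerRZ 2 k * x + b) /\
    (- Z.of_nat D <= k <= Z.of_nat D)%Z /\ dyadic_at D b /\ dyadic_at D (p (S i)).

Lemma pieces_at_common_level :
  dyadic (f (p 0%nat)) -> exists D, forall i, (i < n)%nat -> piece_at_level i D.
Proof.
  intros F0.
  assert (Fp : forall i, (i <= n)%nat -> dyadic (f (p i))).
  { induction i as [|i IH]; intros Hi; [exact F0|].
    destruct (f_affine i ltac:(lia)) as [k [b Hk]]. pose proof (p_incr i ltac:(lia)).
    replace (f (p (S i))) with (f (p i) + powerRZ 2 k * (p (S i) + - p i))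
      by (rewrite !Hk by lra; ring).
    apply dyadic_add; [apply IH; lia|].
    apply dyadic_pow2_mul, dyadic_add; [|apply dyadic_opp]; apply p_dyadic; lia. }
  apply common_bound.
  - intros i D D' HD [k [b [Hk [Hkb [Hb Hp]]]]].
    exists k, b. split; [exact Hk|].
    split; [lia|]. split; apply (dyadic_at_mono D); assumption.
  - intros i Hi. destruct (f_affine i Hi) as [k [b Hk]]. pose proof (p_incr i Hi).
    assert (Hb : dyadic b).
    { replace b with (f (p i) + - (powerRZ 2 k * p i)) by (rewrite Hk by lra; ring).
      apply dyadic_add; [apply Fp; lia | apply dyadic_opp, dyadic_pow2_mul, p_dyadic; lia]. }
    apply dyadicE in Hb as [D1 Hb].
    destruct (proj1 (dyadicE _) (p_dyadic (S i) ltac:(lia))) as [D2 Hp].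
    exists (D1 + D2 + Z.to_nat (Z.abs k))%nat, k, b.
    split; [exact Hk|]. split; [lia|].
    split; [apply (dyadic_at_mono D1) | apply (dyadic_at_mono D2)]; auto; lia.
Qed.

End PiecewiseAffine.

Lemma inF_branch_bounded f g : inF f -> inverse_of g f -> exists N K, branch_bounded f N K.
Proof.
  intros [Hout [f0 [f1 [n [p [p0 [pn [Hinc [Hdy Haff]]]]]]]]] Hg.
  destruct (pieces_at_common_level f n p Hinc Hdy Haff) as [D HD].
  { rewrite p0, f0. exists 0%Z, 0%nat. simpl. field. }
  (* At depth [2D] every interval [u] lies in one piece, since the breakpoints have
     level [D], and the image word has length [2D - k >= D]. *)
  exists (D + D)%nat, (D + D + D)%nat. intros u Lu.
  destruct (wval_num u) as [a [Ea _]]. destruct (wval_bounds u) as [W0 W1].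
  pose proof (pow2_inv_pos (length u)).
  destruct (find_piece p (wval u) n) as [i [Hi [Pi0 Pi1]]]; [lra|lra|].
  destruct (HD i Hi) as [k [b [Hk [Hkb [Hb Hp]]]]].
  assert (Hend : wval u + / 2 ^ length u <= p (S i)).
  { rewrite Ea in *. apply dyadic_at_gap; [|exact Pi1].
    apply (dyadic_at_mono D); [lia | exact Hp]. }
  assert (Hrange := maps_unit_interval f g Hout Hg).
  destruct (affine_branch f u k b D) as [v [Lv Bv]].
  - intros x [Hx0 Hx1]. apply Hk. lra.
  - exact Hb.
  - lia.
  - apply Hrange. lra.
  - apply Hrange. lra.
  - exists v. split; [lia | exact Bv].
Qed.

Lemma inF_branched f g : inF f -> inverse_of g f -> branched f.
Proof.
  intros Hf Hg. pose proof (inF_branch_bounded f g Hf Hg) as Hb.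
  destruct Hf as [Hout [f0 [f1 _]]].
  split; [exact Hout | exact f0 | exact f1 | exists g; exact Hg | exact Hb].
Qed.

(** * Germs at the endpoints *)

Definition germ0 (f : R -> R) (k : Z) : Prop :=
  exists e, 0 < e /\ forall x, 0 <= x <= e -> f x = powerRZ 2 k * x.

Definition germ1 (f : R -> R) (k : Z) : Prop :=
  exists e, 0 < e /\ forall x, 1 - e <= x <= 1 -> f x = 1 - powerRZ 2 k * (1 - x).

Definition reflect (f : R -> R) (x : R) : R := 1 - f (1 - x).

Lemma germ1_reflect f k : germ1 f k <-> germ0 (reflect f) k.
Proof.
  unfold reflect. split; intros [e [He Hf]]; exists e; split; try exact He.
  - intros x Hx. rewrite Hf by lra. ring.
  - intros x Hx. replace x with (1 - (1 - x)) at 1 by ring.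
    rewrite <- (Hf (1 - x)) by lra. ring.
Qed.

Lemma reflect_comp g h : reflect (fun x => g (h x)) = fun x => reflect g (reflect h x).
Proof.
  apply functional_extensionality. intros x. unfold reflect.
  replace (1 - (1 - h (1 - x))) with (h (1 - x)) by ring. reflexivity.
Qed.

Lemma reflect_inverse f g : inverse_of g f -> inverse_of (reflect g) (reflect f).
Proof.
  intros Hg x. unfold reflect.
  replace (1 - (1 - f (1 - x))) with (f (1 - x)) by ring.
  replace (1 - (1 - g (1 - x))) with (g (1 - x)) by ring.
  destruct (Hg (1 - x)) as [-> ->]. split; ring.
Qed.

Lemma powerRZ2_pos k : 0 < powerRZ 2 k.
Proof. apply powerRZ_lt. lra. Qed.

Lemma germ0_comp g h k j : germ0 g k -> germ0 h j -> germ0 (fun x => g (h x)) (k + j).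
Proof.
  intros [eg [Eg Hg]] [eh [Eh Hh]]. pose proof (powerRZ2_pos j) as Pj.
  exists (Rmin eh (eg / powerRZ 2 j)). split.
  - apply Rmin_glb_lt; [exact Eh | apply Rdiv_lt_0_compat; assumption].
  - intros x Hx. pose proof (Rmin_l eh (eg / powerRZ 2 j)).
    pose proof (Rmin_r eh (eg / powerRZ 2 j)).
    rewrite Hh by lra. rewrite Hg.
    + rewrite powerRZ_add by lra. ring.
    + assert (Hb : powerRZ 2 j * x <= powerRZ 2 j * (eg / powerRZ 2 j))
        by (apply Rmult_le_compat_l; lra).
      replace (powerRZ 2 j * (eg / powerRZ 2 j)) with eg in Hb by (field; lra).
      split; [apply Rmult_le_pos|]; lra.
Qed.

Lemma germ0_inv f g k : germ0 f k -> inverse_of g f -> germ0 g (- k).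
Proof.
  intros [e [He Hf]] Hg. pose proof (powerRZ2_pos k) as Pk.
  exists (powerRZ 2 k * e). split; [apply Rmult_lt_0_compat; assumption|].
  intros y Hy. rewrite powerRZ_neg' by lra.
  assert (Hx : 0 <= / powerRZ 2 k * y <= e).
  { pose proof (Rinv_0_lt_compat _ Pk). split; [apply Rmult_le_pos; lra|].
    apply (Rmult_le_reg_l (powerRZ 2 k)); [exact Pk|].
    replace (powerRZ 2 k * (/ powerRZ 2 k * y)) with y by (field; lra). lra. }
  assert (Hfx : f (/ powerRZ 2 k * y) = y) by (rewrite Hf by exact Hx; field; lra).
  rewrite <- Hfx at 1. apply Hg.
Qed.

Lemma germ1_comp g h k j : germ1 g k -> germ1 h j -> germ1 (fun x => g (h x)) (k + j).
Proof.
  rewrite !germ1_reflect, (reflect_comp g h). exact (germ0_comp (reflect g) (reflect h) k j).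
Qed.

Lemma germ1_inv f g k : germ1 f k -> inverse_of g f -> germ1 g (- k).
Proof.
  rewrite !germ1_reflect. intros Hf Hg. exact (germ0_inv _ _ k Hf (reflect_inverse f g Hg)).
Qed.

Lemma inF_germ0 f : inF f -> exists k, germ0 f k.
Proof.
  intros [_ [f0 [_ [n [p [p0 [pn [Hinc [_ Haff]]]]]]]]].
  destruct n as [|n]; [rewrite p0 in pn; lra|].
  destruct (Haff 0%nat ltac:(lia)) as [k [b Hk]]. pose proof (Hinc 0%nat ltac:(lia)).
  assert (b = 0) as ->.
  { pose proof (Hk 0 ltac:(lra)) as E. rewrite f0 in E. lra. }
  exists k, (p 1%nat). split; [lra|]. intros x Hx. rewrite Hk by lra. ring.
Qed.

Lemma inF_germ1 f : inF f -> exists k, germ1 f k.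
Proof.
  intros [_ [_ [f1 [n [p [p0 [pn [Hinc [_ Haff]]]]]]]]].
  destruct n as [|n]; [rewrite p0 in pn; lra|].
  destruct (Haff n ltac:(lia)) as [k [b Hk]]. pose proof (Hinc n ltac:(lia)).
  assert (b = 1 - powerRZ 2 k) as ->.
  { pose proof (Hk 1 ltac:(lra)) as E. rewrite f1 in E. lra. }
  exists k, (1 - p n). split; [lra|]. intros x Hx. rewrite Hk by lra. ring.
Qed.

Definition flat_ends (f : R -> R) : Prop := germ0 f 0 /\ germ1 f 0.

Lemma commF_branched c : commF c -> branched c /\ flat_ends c.
Proof.
  intros [f [g [fi [gi [Ff [Fg [Hfi [Hgi Ec]]]]]]]].
  replace c with (fun x => f (g (fi (gi x)))) by (apply functional_extensionality; auto).
  assert (Bf := inF_branched f fi Ff Hfi). assert (Bg := inF_branched g gi Fg Hgi).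
  assert (Bfi := branched_inv f fi Bf Hfi). assert (Bgi := branched_inv g gi Bg Hgi).
  destruct (inF_germ0 f Ff) as [k1 F0]. destruct (inF_germ0 g Fg) as [k2 G0].
  destruct (inF_germ1 f Ff) as [j1 F1]. destruct (inF_germ1 g Fg) as [j2 G1].
  split; [|split].
  - apply branched_comp; [exact Bf|]. apply branched_comp; [exact Bg|].
    apply branched_comp; [exact Bfi | exact Bgi].
  - replace 0%Z with (k1 + (k2 + (- k1 + - k2)))%Z by lia.
    apply germ0_comp; [exact F0|]. apply germ0_comp; [exact G0|].
    apply germ0_comp; [apply (germ0_inv f) | apply (germ0_inv g)]; assumption.
  - replace 0%Z with (j1 + (j2 + (- j1 + - j2)))%Z by lia.
    apply germ1_comp; [exact F1|]. apply germ1_comp; [exact G1|].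
    apply germ1_comp; [apply (germ1_inv f) | apply (germ1_inv g)]; assumption.
Qed.

Lemma derivedF_branched f : derivedF f -> branched f /\ flat_ends f.
Proof.
  induction 1 as [|c Hc|f g _ [Bf [F0 F1]] _ [Bg [G0 G1]]|f g _ [Bf [F0 F1]] Hg].
  - split; [exact branched_id|].
    split; exists 1; split; try lra; intros x _; simpl; ring.
  - exact (commF_branched c Hc).
  - split; [apply branched_comp; assumption|].
    split; [apply (germ0_comp _ _ 0 0) | apply (germ1_comp _ _ 0 0)]; assumption.
  - split; [exact (branched_inv f g Bf Hg)|].
    split; [apply (germ0_inv f _ 0) | apply (germ1_inv f _ 0)]; assumption.
Qed.

(** * Local membership in H *)

Lemma branch_mixed f g u v :
  inverse_of g f -> f 0 = 0 -> f 1 = 1 -> branch f u v -> mixed u -> mixed v.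
Proof.
  intros Hg f0 f1 Hb [Ht Hf].
  assert (Hinj : forall a b, f a = f b -> a = b).
  { intros a b E. destruct (Hg a) as [<- _]. destruct (Hg b) as [<- _]. congruence. }
  pose proof (pow2_inv_pos (length u)).
  split.
  - destruct (in_dec Bool.bool_dec true v) as [|Hn]; [assumption|exfalso].
    apply wval_no_true in Hn.
    assert (E : f (wval u) = f 0).
    { rewrite f0, Hb by (split; lra). rewrite Hn. field. apply pow2_neq0. }
    apply Hinj in E. pose proof (wval_pos u Ht). lra.
  - destruct (in_dec Bool.bool_dec false v) as [|Hn]; [assumption|exfalso].
    apply wval_end_no_false in Hn.
    assert (E : f (wval u + / 2 ^ length u) = f 1).
    { rewrite f1, Hb by (split; lra). rewrite <- Hn. field. split; apply pow2_neq0. }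
    apply Hinj in E. pose proof (wval_end_lt1 u Hf). lra.
Qed.

Lemma dyadic_partition N (P : R -> R -> Prop) :
  (forall u, length u = N -> P (wval u) (wval u + / 2 ^ N)) ->
  exists n p, p 0%nat = 0 /\ p n = 1 /\ (forall i, (i < n)%nat -> p i < p (S i)) /\
    (forall i, (i <= n)%nat -> dyadic (p i)) /\ (forall i, (i < n)%nat -> P (p i) (p (S i))).
Proof.
  intros HP. pose proof (pow2_pos N) as PN.
  assert (E2 : INR (2 ^ N) = 2 ^ N) by (rewrite pow_INR; simpl; f_equal; lra).
  exists (2 ^ N)%nat, (fun i => INR i / 2 ^ N).
  split; [simpl; field; lra|]. split; [rewrite E2; field; lra|].
  split; [intros i _; rewrite S_INR; pose proof (pow2_inv_pos N); unfold Rdiv; lra|].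
  split; [intros i _; exists (Z.of_nat i), N; rewrite INR_IZR_INZ; reflexivity|].
  intros i Hi. destruct (word_of_num N (Z.of_nat i)) as [u [Lu Eu]].
  - rewrite <- INR_IZR_INZ. apply pos_INR.
  - rewrite <- INR_IZR_INZ, <- S_INR, <- E2. apply le_INR. lia.
  - rewrite <- INR_IZR_INZ in Eu. rewrite <- Eu, S_INR.
    replace ((INR i + 1) / 2 ^ N) with (wval u + / 2 ^ N) by (rewrite Eu; field; lra).
    apply HP, Lu.
Qed.

Lemma inF_of_branches f N :
  (forall x, (x < 0 \/ 1 < x) -> f x = x) -> f 0 = 0 -> f 1 = 1 ->
  (forall u, length u = N -> exists v, branch f u v) -> inF f.
Proof.
  intros Hout f0 f1 Hb. split; [exact Hout|]. split; [exact f0|]. split; [exact f1|].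
  apply (dyadic_partition N
           (fun a b => exists k c, forall x, a <= x <= b -> f x = powerRZ 2 k * x + c)).
  intros u Lu. destruct (Hb u Lu) as [v Bv].
  exists (Z.of_nat (length u) - Z.of_nat (length v))%Z,
    (wval v - wval u * 2 ^ length u / 2 ^ length v).
  intros x Hx. rewrite <- Lu in Hx. rewrite (Bv x Hx), powerRZ2_sub.
  field. apply pow2_neq0.
Qed.

Section Closure.

Variable H : (R -> R) -> Prop.
Hypothesis HF : subgroupF H.
Hypothesis sim_mixed : forall u, mixed u -> simH H u [false; true].

Lemma inCl_of_branched f : branched f -> flat_ends f -> inCl H f.
Proof.
  intros [Hout f0 f1 [g Hg] [N0 [K Bf]]] [[e0 [He0 G0]] [e1 [He1 G1]]].
  destruct (pow2_inv_le (Rmin e0 e1) N0) as [N [HN Hsmall]];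
    [apply Rmin_glb_lt; assumption|].
  pose proof (Rmin_l e0 e1). pose proof (Rmin_r e0 e1). pose proof (pow2_inv_pos N).
  assert (Bf' : forall u, length u = N -> exists v, branch f u v).
  { intros u Lu. destruct (split_at_length u N0) as [u1 [w [-> L1]]]; [lia|].
    destruct (branch_bounded_app f N0 K u1 w Bf L1) as [v [_ Bv]].
    exists (v ++ w). exact Bv. }
  split; [exact (inF_of_branches f N Hout f0 f1 Bf')|].
  destruct (dyadic_partition N (fun a b => exists h, H h /\ forall x, a <= x <= b -> f x = h x))
    as [n [p [p0 [pn [Hinc [_ Hpieces]]]]]]; [|exists n, p; auto].
  intros u Lu.
  destruct (in_dec Bool.bool_dec true u) as [Ht|Ht];
    [destruct (in_dec Bool.bool_dec false u) as [Hf|Hf]|].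
  - destruct (Bf' u Lu) as [v Bv].
    assert (Hv := branch_mixed f g u v Hg f0 f1 Bv (conj Ht Hf)).
    destruct (simH_trans H HF u [false; true] v (sim_mixed u (conj Ht Hf))
                (simH_sym H HF v [false; true] (sim_mixed v Hv))) as [h [Hh Bh]].
    exists h. split; [exact Hh|]. intros x Hx. rewrite <- Lu in Hx.
    rewrite (Bv x Hx), (Bh x Hx). reflexivity.
  - exists (fun x => x). split; [apply HF|]. intros x Hx.
    apply wval_end_no_false in Hf. rewrite Lu in Hf.
    rewrite G1 by lra. simpl. ring.
  - exists (fun x => x). split; [apply HF|]. intros x Hx.
    apply wval_no_true in Ht. rewrite G0 by lra. simpl. ring.
Qed.

End Closure.

Theorem lemma2p4 (H : (R -> R) -> Prop) :
  subgroupF H ->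
  (forall r : nat, (1 <= r)%nat -> simH H (repeat true r ++ [false]) [true; false]) ->
  (forall s : nat, (1 <= s)%nat -> simH H (repeat false s ++ [true]) [false; true]) ->
  simH H [false; true] [true; false] ->
  simH H [true; false] [false; true; false] ->
  simH H [false; true; false] [false; true; true] ->
  forall f : R -> R, derivedF f -> inCl H f.
Proof.
  intros HF Hones Hzeros H01 H10 H010 f Hf.
  destruct (derivedF_branched f Hf) as [Bf Ef].
  apply (inCl_of_branched H HF); [|exact Bf | exact Ef].
  exact (simH_mixed H HF Hones Hzeros H01 H10 H010).
Qed.
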